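(* The functor $i_\ell:\mathbf{Gr}\to\mathbf{Gr}_\ell$, which is left Quillen as the left adjoint of $(-)^\circ$ for the Matsushita model structures, is also right Quillen (for the same model structures), i.e. it preserves fibrations and trivial fibrations.
   Context: A simplicial complex consists of a vertex set and a collection of nonempty finite subsets (simplices) containing all singletons and closed under nonempty subsets; maps are vertex functions preserving simplices; $\mathbf{Cpx}$ is the category. $\mathbf{Gr}$ (reflexive graphs) is the full subcategory of complexes whose simplices have at most two elements; $\mathrm{C}\ell:\mathbf{Gr}\to\mathbf{Cpx}$ is the clique complex functor. $\mathbf{\Delta}^n$ is the complex on $\{0,\dots,n\}$ with all nonempty subsets simplices, $\mathrm{Sing}(K)_n=\mathbf{Cpx}(\mathbf{\Delta}^n,K)$, $\mathrm{Ex}$ is the right adjoint of barycentric subdivision. Matsushita model structure on $\mathbf{Gr}$: $f$ is a weak equivalence iff $\mathrm{Sing}\,\mathrm{C}\ell(f)$ is a weak homotopy equivalence, a fibration iff $\mathrm{Ex}^2\mathrm{Sing}\,\mathrm{C}\ell(f)$ is a Kan fibration, cofibrations by left lifting against trivial fibrations. A loop graph is a set with a symmetric relation; maps preserve the relation; $\mathbf{Gr}_\ell$ is the category. $i_\ell$ regards a reflexive graph as a loop graph with every vertex looped; it has a left adjoint $(-)_\ell$ (add all loops) and a right adjoint $(-)^\circ$ (maximal reflexive subgraph, induced on looped vertices). Matsushita model structure on $\mathbf{Gr}_\ell$: $f$ is a weak equivalence (fibration) iff $f^\circ$ is one in $\mathbf{Gr}$; cofibrations by left lifting against trivial fibrations.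 *)

From Stdlib Require Import FunctionalExtensionality ProofIrrelevance Relations.
From HB Require Import structures.
From mathcomp Require Import all_boot.
Set Implicit Arguments. Unset Strict Implicit. Unset Printing Implicit Defensive.

(* The simplex category: maps [m] -> [n] are monotone maps             *)
(*   'I_m.+1 -> 'I_n.+1.                                               *)
Definition monob m n (f : {ffun 'I_m.+1 -> 'I_n.+1}) : bool :=
  [forall i : 'I_m.+1, forall j : 'I_m.+1, (i <= j) ==> (f i <= f j)].
Definition Dmor m n := {f : {ffun 'I_m.+1 -> 'I_n.+1} | monob f}.

Lemma monoP m n (f : {ffun 'I_m.+1 -> 'I_n.+1}) :
  monob f -> forall i j : 'I_m.+1, i <= j -> f i <= f j.
Proof. by move=> H i j hij; move: ((forallP ((forallP H) i)) j) => /implyP; apply. Qed.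

Lemma Dcomp_mono l m n (g : Dmor m n) (f : Dmor l m) :
  monob [ffun i => val g (val f i)].
Proof.
apply/forallP => i; apply/forallP => j; apply/implyP => hij; rewrite !ffunE.
by apply: (monoP (valP g)); apply: (monoP (valP f)).
Qed.
Definition Dcomp l m n (g : Dmor m n) (f : Dmor l m) : Dmor l n :=
  exist (fun h => monob h) _ (Dcomp_mono g f).

Lemma Did_mono n : monob [ffun i : 'I_n.+1 => i].
Proof. by apply/forallP => i; apply/forallP => j; apply/implyP; rewrite !ffunE. Qed.
Definition Did n : Dmor n n := exist (fun h => monob h) _ (Did_mono n).

Lemma Dconst_mono m (e : 'I_2) : monob [ffun _ : 'I_m.+1 => e].
Proof. by apply/forallP => i; apply/forallP => j; apply/implyP; rewrite !ffunE. Qed.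
Definition Dconst m (e : 'I_2) : Dmor m 1 := exist (fun h => monob h) _ (Dconst_mono m e).

(* The functor laws are a separate predicate [is_sSet]; they are only  *)
(* needed where one quantifies over all simplicial sets.               *)
Record sSet := SSet {
  sob :> nat -> Type;
  sact : forall m n, Dmor m n -> sob n -> sob m }.
Arguments sact {s m n}.

Definition is_sSet (X : sSet) : Prop :=
  (forall n (x : X n), sact (Did n) x = x) /\
  (forall l m n (f : Dmor l m) (g : Dmor m n) (x : X n),
      sact (Dcomp g f) x = sact f (sact g x)).

Record sHom (X Y : sSet) := SHom {
  hmap :> forall n, X n -> Y n;
  hnat : forall m n (t : Dmor m n) (x : X n), hmap (sact t x) = sact t (hmap x) }.
Arguments hmap {X Y} s {n}.

Lemma sHom_ext X Y (a b : sHom X Y) : (forall n x, a n x = b n x) -> a = b.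
Proof.
case: a => a ha; case: b => b hb /= H.
have E : a = b by apply: functional_extensionality_dep => n;
  apply: functional_extensionality => x; apply: H.
subst b; f_equal; apply: proof_irrelevance.
Qed.

Definition scomp X Y Z (g : sHom Y Z) (f : sHom X Y) : sHom X Z :=
  @SHom X Z (fun n x => g n (f n x))
    (fun m n t x => eq_trans (f_equal (g m) (hnat f t x)) (hnat g t (f n x))).

Definition Delta n : sSet := @SSet (fun m => Dmor m n) (fun l m t x => Dcomp x t).

Definition hornb n (k : 'I_n.+1) m (t : Dmor m n) : bool :=
  [exists j : 'I_n.+1, (j != k) && (j \notin codom (val t))].

Lemma horn_act n (k : 'I_n.+1) l m (s : Dmor l m) (t : Dmor m n) :
  hornb k t -> hornb k (Dcomp t s).
Proof.
move=> /existsP [j /andP [jk jn]]; apply/existsP; exists j; rewrite jk /=.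
apply/negP => /codomP [i]; rewrite ffunE => e.
by move/negP: jn; apply; apply/codomP; exists (val s i).
Qed.

Definition horn n (k : 'I_n.+1) : sSet :=
  @SSet (fun m => {t : Dmor m n | hornb k t})
    (fun l m s t => exist (fun u => hornb k u) (Dcomp (val t) s) (horn_act s (valP t))).

Definition horn_incl n (k : 'I_n.+1) : sHom (horn k) (Delta n) :=
  @SHom (horn k) (Delta n) (fun m t => val t) (fun _ _ _ _ => erefl).

Definition kan_fib (E B : sSet) (p : sHom E B) : Prop :=
  forall n (k : 'I_n.+2) (h : sHom (horn k) E) (b : sHom (Delta n.+1) B),
    (forall m x, p m (h m x) = b m (horn_incl k m x)) ->
    exists l : sHom (Delta n.+1) E,
      (forall m x, l m (horn_incl k m x) = h m x) /\
      (forall m x, p m (l m x) = b m x).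

Definition kan_cpx (Z : sSet) : Prop :=
  forall n (k : 'I_n.+2) (h : sHom (horn k) Z),
    exists l : sHom (Delta n.+1) Z, forall m x, l m (horn_incl k m x) = h m x.

(* (Joyal--Tierney: f is a weak equivalence iff for every Kan complex  *)
(*  Z, f^* : [Y,Z] -> [X,Z] is bijective on homotopy classes)          *)
Definition sprod (X Y : sSet) : sSet :=
  @SSet (fun n => (X n * Y n)%type) (fun m n t x => (sact t x.1, sact t x.2)).

Definition shtpy X Z (g h : sHom X Z) : Prop :=
  exists H : sHom (sprod X (Delta 1)) Z,
    forall n (x : X n), H n (x, Dconst n ord0) = g n x /\
                        H n (x, Dconst n ord_max) = h n x.

Definition shtpc X Z : relation (sHom X Z) := clos_refl_sym_trans _ (@shtpy X Z).

Definition weq X Y (f : sHom X Y) : Prop :=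
  forall Z : sSet, is_sSet Z -> kan_cpx Z ->
    (forall h : sHom X Z, exists g : sHom Y Z, shtpc (scomp g f) h) /\
    (forall g1 g2 : sHom Y Z, shtpc (scomp g1 f) (scomp g2 f) -> shtpc g1 g2).

(* Barycentric subdivision sd Delta^n = nerve of the poset of nonempty *)
(* subsets of [n];  Ex(X)_n = Hom(sd Delta^n, X).                      *)
Definition chainb n k (c : {ffun 'I_k.+1 -> {set 'I_n.+1}}) : bool :=
  [forall i, c i != set0] &&
  [forall i : 'I_k.+1, forall j : 'I_k.+1, (i <= j) ==> (c i \subset c j)].

Lemma chain_act n l k (t : Dmor l k) (c : {ffun 'I_k.+1 -> {set 'I_n.+1}}) :
  chainb c -> chainb [ffun i => c (val t i)].
Proof.
move=> /andP [/forallP ne /forallP sub]; apply/andP; split.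
  by apply/forallP => i; rewrite ffunE.
apply/forallP => i; apply/forallP => j; apply/implyP => hij; rewrite !ffunE.
by move: (forallP (sub (val t i)) (val t j)) => /implyP; apply; apply: (monoP (valP t)).
Qed.

Definition sdD n : sSet :=
  @SSet (fun k => {c : {ffun 'I_k.+1 -> {set 'I_n.+1}} | chainb c})
    (fun l k t c => exist (fun d => chainb d) _ (chain_act t (valP c))).

Lemma chain_img m n (t : Dmor m n) k (c : {ffun 'I_k.+1 -> {set 'I_m.+1}}) :
  chainb c -> chainb [ffun i => val t @: c i].
Proof.
move=> /andP [/forallP ne /forallP sub]; apply/andP; split.
  apply/forallP => i; rewrite ffunE; apply/negP => /eqP E.
  move/set0Pn: (ne i) => [x xi].
  by move: (imset_f (val t) xi); rewrite E inE.
apply/forallP => i; apply/forallP => j; apply/implyP => hij; rewrite !ffunE.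
by apply: imsetS; move: (forallP (sub i) j) => /implyP; apply.
Qed.

Definition sdmap m n (t : Dmor m n) : sHom (sdD m) (sdD n).
Proof.
refine (@SHom (sdD m) (sdD n)
          (fun k c => exist (fun d => chainb d) _ (chain_img t (valP c))) _).
move=> l k s c; apply: val_inj => /=; apply/ffunP => i; by rewrite !ffunE.
Defined.

Definition Ex (X : sSet) : sSet :=
  @SSet (fun n => sHom (sdD n) X) (fun m n t h => scomp h (sdmap t)).

Definition Exmap X Y (f : sHom X Y) : sHom (Ex X) (Ex Y).
Proof.
refine (@SHom (Ex X) (Ex Y) (fun n h => scomp f h) _).
by move=> m n t h; apply: sHom_ext.
Defined.

Record refl_graph := RGraph {
  rV : Type;
  radj : rV -> rV -> Prop;
  radj_sym : forall x y, radj x y -> radj y x;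
  radj_refl : forall x, radj x x }.

Record rgmap (G H : refl_graph) := RGMap {
  rgf :> rV G -> rV H;
  rgpres : forall x y, radj x y -> radj (rgf x) (rgf y) }.

Record loop_graph := LGraph {
  lV : Type;
  ladj : lV -> lV -> Prop;
  ladj_sym : forall x y, ladj x y -> ladj y x }.

Record lgmap (L M : loop_graph) := LGMap {
  lgf :> lV L -> lV M;
  lgpres : forall x y, ladj x y -> ladj (lgf x) (lgf y) }.

Definition i_l (G : refl_graph) : loop_graph := @LGraph (rV G) (@radj G) (@radj_sym G).
Definition i_l_map G H (f : rgmap G H) : lgmap (i_l G) (i_l H) :=
  @LGMap (i_l G) (i_l H) (rgf f) (@rgpres G H f).

Definition circ (L : loop_graph) : refl_graph :=
  @RGraph {x : lV L | ladj x x} (fun x y => ladj (proj1_sig x) (proj1_sig y))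
    (fun x y => @ladj_sym L _ _) (fun x => proj2_sig x).
Definition circ_map L M (f : lgmap L M) : rgmap (circ L) (circ M) :=
  @RGMap (circ L) (circ M)
    (fun x => exist (fun y => ladj y y) (f (proj1_sig x)) (lgpres f (proj2_sig x)))
    (fun x y h => lgpres f h).

Lemma exist_irr (A : Type) (P : A -> Prop) (a b : A) (p : P a) (q : P b) :
  a = b -> exist P a p = exist P b q.
Proof. by move=> E; subst b; f_equal; apply: proof_irrelevance. Qed.

(* Sing Cl(G): Cpx(Delta^n, Cl G) = vertex maps [n] -> V whose image is  *)
(* a clique (simplices of Delta^n are all nonempty subsets of [n], and  *)
(* the simplices of Cl G are the finite nonempty cliques).             *)
Definition SingCl (G : refl_graph) : sSet :=
  @SSet (fun n => {s : 'I_n.+1 -> rV G | forall i j, radj (s i) (s j)})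
    (fun m n t s => exist (fun u : 'I_m.+1 -> rV G => forall i j, radj (u i) (u j)) (fun i => proj1_sig s (val t i))
                      (fun i j => proj2_sig s _ _)).

Definition SingCl_map G H (f : rgmap G H) : sHom (SingCl G) (SingCl H).
Proof.
refine (@SHom (SingCl G) (SingCl H)
          (fun n s => exist (fun u : 'I_n.+1 -> rV H => forall i j, radj (u i) (u j)) (fun i => f (proj1_sig s i))
                        (fun i j => rgpres f (proj2_sig s i j))) _).
by move=> m n t s; apply: exist_irr.
Defined.

Definition gr_fib G H (f : rgmap G H) : Prop :=
  kan_fib (Exmap (Exmap (SingCl_map f))).
Definition gr_weq G H (f : rgmap G H) : Prop := weq (SingCl_map f).

Definition grl_fib L M (f : lgmap L M) : Prop := gr_fib (circ_map f).
Definition grl_weq L M (f : lgmap L M) : Prop := gr_weq (circ_map f).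

(* Every vertex of [i_l G] carries a loop, so [(i_l G)°] is [G] itself up to
   attaching the (irrelevant) loop proofs, naturally in [G].  Hence [(i_l f)°]
   is isomorphic to [f] in the arrow category of [Gr], and both Matsushita
   fibrations and weak equivalences, being defined through the functors
   [Sing Cl] and [Ex], are invariant under isomorphisms of arrows. *)
From Stdlib Require Import FunctionalExtensionality Relations.
From mathcomp Require Import all_boot.
Set Implicit Arguments. Unset Strict Implicit.

Definition siso X Y (i : sHom X Y) (j : sHom Y X) : Prop :=
  (forall n x, j n (i n x) = x) /\ (forall n y, i n (j n y) = y).

Definition siso_arrow E B E' B' (p : sHom E B) (p' : sHom E' B') : Prop :=
  exists (i : sHom E E') (j : sHom E' E) (iB : sHom B B') (jB : sHom B' B),
    [/\ siso i j, siso iB jB & forall n x, p' n (i n x) = iB n (p n x)].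

Lemma siso_arrow_Exmap E B E' B' (p : sHom E B) (p' : sHom E' B') :
  siso_arrow p p' -> siso_arrow (Exmap p) (Exmap p').
Proof.
move=> [i [j [iB [jB [[i1 i2] [b1 b2] C]]]]].
exists (Exmap i), (Exmap j), (Exmap iB), (Exmap jB).
split; try split; move=> n x; apply: sHom_ext => m y /=.
- exact: i1.
- exact: i2.
- exact: b1.
- exact: b2.
- exact: C.
Qed.

Lemma kan_fib_siso_arrow E B E' B' (p : sHom E B) (p' : sHom E' B') :
  siso_arrow p p' -> kan_fib p -> kan_fib p'.
Proof.
move=> [i [j [iB [jB [[_ i2] [b1 b2] C]]]]] K n k h b hb.
have C' m y : p m (j m y) = jB m (p' m y) by rewrite -[p m _]b1 -C i2.
have [l [l1 l2]] := K n k (scomp j h) (scomp jB b)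
  (fun m x => eq_trans (C' m (h m x)) (f_equal (jB m) (hb m x))).
exists (scomp i l); split => m x /=; first by rewrite l1 /= i2.
by rewrite C l2 /= b2.
Qed.

Definition sprod_mapl X X' Y (j : sHom X' X) : sHom (sprod X' Y) (sprod X Y).
Proof.
refine (@SHom (sprod X' Y) (sprod X Y) (fun n x => (j n x.1, x.2)) _).
by move=> m n t [x y] /=; rewrite hnat.
Defined.

Lemma shtpc_scomp X X' Z (j : sHom X' X) (g h : sHom X Z) :
  shtpc g h -> shtpc (scomp g j) (scomp h j).
Proof.
elim=> {g h} [g h [H HH]| g | g h _ IH | g h k _ IH1 _ IH2].
- by apply: rst_step; exists (scomp H (sprod_mapl _ j)) => n x /=; apply: HH.
- exact: rst_refl.
- exact: rst_sym.
- exact: rst_trans IH2.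
Qed.

Lemma weq_siso_arrow X Y X' Y' (f : sHom X Y) (f' : sHom X' Y') :
  siso_arrow f f' -> weq f -> weq f'.
Proof.
move=> [i [j [iY [jY [[_ i2] [y1 y2] C]]]]] W Z sZ kZ.
have [W1 W2] := W Z sZ kZ.
have C' m y : f m (j m y) = jY m (f' m y) by rewrite -[f m _]y1 -C i2.
have pull g : scomp (scomp g f') i = scomp (scomp g iY) f.
  by apply: sHom_ext => n x /=; rewrite C.
have push g : scomp (scomp g f) j = scomp (scomp g jY) f'.
  by apply: sHom_ext => n x /=; rewrite C'.
split.
- move=> h; have [g /(shtpc_scomp j)] := W1 (scomp h i).
  have -> : scomp (scomp h i) j = h by apply: sHom_ext => n x /=; rewrite i2.
  by rewrite push; exists (scomp g jY).
- move=> g1 g2 /(shtpc_scomp i); rewrite !pull => /W2 /(shtpc_scomp jY).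
  have iYK g : scomp (scomp g iY) jY = g.
    by apply: sHom_ext => n x /=; rewrite y2.
  by rewrite !iYK.
Qed.

Lemma SingCl_siso_arrow G H G' H' (f : rgmap G H) (f' : rgmap G' H')
    (i : rgmap G G') (j : rgmap G' G) (iH : rgmap H H') (jH : rgmap H' H) :
  cancel i j -> cancel j i -> cancel iH jH -> cancel jH iH ->
  (forall x, f' (i x) = iH (f x)) ->
  siso_arrow (SingCl_map f) (SingCl_map f').
Proof.
move=> i1 i2 h1 h2 C.
exists (SingCl_map i), (SingCl_map j), (SingCl_map iH), (SingCl_map jH).
split; try split; move=> n [s hs];
  apply: exist_irr; apply: functional_extensionality => k /=.
- exact: i1.
- exact: i2.
- exact: h1.
- exact: h2.
- exact: C.
Qed.

Definition circ_i_l_in G : rgmap G (circ (i_l G)) :=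
  @RGMap G (circ (i_l G))
    (fun x => exist (fun y : lV (i_l G) => ladj y y) x (@radj_refl G x))
    (fun x y h => h).

Definition circ_i_l_out G : rgmap (circ (i_l G)) G :=
  @RGMap (circ (i_l G)) G (fun x => proj1_sig x) (fun x y h => h).

Lemma circ_i_l_inK G : cancel (circ_i_l_in G) (circ_i_l_out G).
Proof. by []. Qed.

Lemma circ_i_l_outK G : cancel (circ_i_l_out G) (circ_i_l_in G).
Proof. by move=> [x hx]; apply: exist_irr. Qed.

Lemma circ_i_l_in_natural G H (f : rgmap G H) x :
  circ_map (i_l_map f) (circ_i_l_in G x) = circ_i_l_in H (f x).
Proof. exact: exist_irr. Qed.

Theorem lemma5p18 (G H : refl_graph) (f : rgmap G H) :
  (gr_fib f -> grl_fib (i_l_map f)) /\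
  (gr_fib f /\ gr_weq f -> grl_fib (i_l_map f) /\ grl_weq (i_l_map f)).
Proof.
have A : siso_arrow (SingCl_map f) (SingCl_map (circ_map (i_l_map f))).
  exact: SingCl_siso_arrow (@circ_i_l_inK G) (@circ_i_l_outK G)
    (@circ_i_l_inK H) (@circ_i_l_outK H) (circ_i_l_in_natural f).
have fib : gr_fib f -> grl_fib (i_l_map f).
  exact: kan_fib_siso_arrow (siso_arrow_Exmap (siso_arrow_Exmap A)).
split=> // -[/fib F W]; split=> //.
exact: weq_siso_arrow A W.
Qed.
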